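(* Let $p$ be a prime and $G$ a $p$-group of order $p^m$ with $|G/Z(G)|=p^3$. (1) If $G$ has no abelian maximal subgroup, then $$B_G(t)=\frac{1-p^{m-5}t}{(1-p^{m-2}t)(1-p^{m-3}t)}.$$ (2) If $G$ possesses an abelian maximal subgroup, then $$B_G(t)=\frac{1}{1-p^{m-3}t}\left(1+\frac{(p^{m-2}-p^{m-4})t}{1-p^{m-1}t}+\frac{(p^{m-2}-p^{m-3})t}{1-p^{m-2}t}\right).$$
   Context: For a finite group $G$ and $n\ge0$, let $G^{(n)}=\{(x_1,\dots,x_n)\in G^n: x_ix_j=x_jx_i\ \forall i,j\}$, on which $G$ acts by simultaneous conjugation; let $\beta_{G,n}$ be the number of orbits and $B_G(t)=\sum_{n\ge0}\beta_{G,n}t^n$, viewed as a rational function of $t$. *)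

From HB Require Import structures.
From mathcomp Require Import all_boot all_order all_algebra all_fingroup all_solvable.
Set Implicit Arguments. Unset Strict Implicit. Unset Printing Implicit Defensive.
Import GRing.Theory Num.Theory.

Local Open Scope group_scope.

Definition tconj (gT : finGroupType) (n : nat) (x : {ffun 'I_n -> gT}) (g : gT)
  : {ffun 'I_n -> gT} := [ffun i => x i ^ g].

Definition commuting_tuples (gT : finGroupType) (G : {set gT}) (n : nat)
  : {set {ffun 'I_n -> gT}} :=
  [set x : {ffun 'I_n -> gT} | [forall i, x i \in G] &&
                               [forall i, forall j, x i * x j == x j * x i]].

Definition tconj_orbit (gT : finGroupType) (G : {set gT}) (n : nat)
  (x : {ffun 'I_n -> gT}) : {set {ffun 'I_n -> gT}} :=
  [set tconj x g | g in G].

Definition beta (gT : finGroupType) (G : {set gT}) (n : nat) : nat :=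
  #|[set tconj_orbit G x | x in commuting_tuples G n]|.

Local Open Scope ring_scope.

Definition fps := nat -> rat.
Definition fps_add (a b : fps) : fps := fun n => a n + b n.
Definition fps_mul (a b : fps) : fps :=
  fun n => \sum_(i < n.+1) a i * b (n - i)%N.
Definition fps_of_poly (q : {poly rat}) : fps := fun n => q`_n.
(* the power series expansion of 1/(1 - a t) *)
Definition fps_geom (a : rat) : fps := fun n => a ^+ n.

Definition Bseries (gT : finGroupType) (G : {set gT}) : fps :=
  fun n => (beta G n)%:R.

Definition pz (p : nat) (k : int) : rat := (p%:R : rat) ^ k.

(** By the Cauchy-Frobenius lemma, [beta G n * #|G|] is the number of
    commuting [(n+1)]-tuples of [G], and splitting off the first entry [a]
    of a tuple gives [#|H^(n+1)| = \sum_(a in H) #|C_H(a)^(n)|].  When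
    [|G : Z(G)| = p^3], the centraliser [C] of a noncentral [a] lies strictly
    between [Z(G)] and [G], and [Z(C)] contains [Z(G)] and [a]; hence
    [|C : Z(C)| <= p], so [C] is abelian, of order [p^(m-2)] or [p^(m-1)],
    and [#|C^(n)| = |C|^n].  A centraliser of order [p^(m-1)] is an abelian
    maximal subgroup [M]; then [Z(G) <= M], [C_G(a) = M] for [a] in
    [M :\ Z(G)], and every [a] outside [M] has a centraliser of order
    [p^(m-2)], since otherwise two abelian subgroups of order [p^(m-1)]
    would meet only in [Z(G)].  Either way [beta G n] satisfies a first-order
    linear recurrence with geometric inhomogeneous terms, and solving it
    gives the two rational generating functions. *)

From HB Require Import structures.
From mathcomp Require Import all_boot all_order all_algebra all_fingroup all_solvable.
From mathcomp Require Import zify ring.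
From Stdlib Require Import FunctionalExtensionality.
Import GRing.Theory Num.Theory.

Set Implicit Arguments.
Unset Strict Implicit.
Unset Printing Implicit Defensive.

Section CommutingTuples.
Variable gT : finGroupType.
Local Open Scope group_scope.

Lemma commuting_tuplesP (H : {set gT}) n (x : {ffun 'I_n -> gT}) :
  reflect ((forall i, x i \in H) /\ (forall i j, commute (x i) (x j)))
          (x \in commuting_tuples H n).
Proof.
rewrite inE; apply: (iffP andP) => [[/forallP Hx /forallP cx] | [Hx cx]].
  by split=> // i j; apply/eqP; exact: (forallP (cx i) j).
split; apply/forallP=> i //; apply/forallP=> j; apply/eqP; exact: cx.
Qed.

Lemma commuting_tuples0 (H : {set gT}) : #|commuting_tuples H 0| = 1%N.
Proof.
have -> : commuting_tuples H 0 = setT.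
  by apply/setP=> x; rewrite in_setT; apply/commuting_tuplesP; split=> -[].
by rewrite cardsT card_ffun card_ord.
Qed.

Lemma card_commuting_tuples_abelian (A : {set gT}) n :
  abelian A -> #|commuting_tuples A n| = (#|A| ^ n)%N.
Proof.
move=> cAA; have -> : commuting_tuples A n = [set x in ffun_on A].
  apply/setP=> x; rewrite [RHS]inE.
  apply/commuting_tuplesP/ffun_onP => [[] // | Ax]; split=> // i j.
  exact: (centsP cAA).
by rewrite cardsE card_ffun_on card_ord.
Qed.

Definition tcons n (a : gT) (y : {ffun 'I_n -> gT}) : {ffun 'I_n.+1 -> gT} :=
  [ffun i => if unlift ord0 i is Some j then y j else a].

Lemma tcons0 n a (y : {ffun 'I_n -> gT}) : tcons a y ord0 = a.
Proof. by rewrite ffunE unlift_none. Qed.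

Lemma tconsS n a (y : {ffun 'I_n -> gT}) j : tcons a y (lift ord0 j) = y j.
Proof. by rewrite ffunE liftK. Qed.

Definition ttail n (x : {ffun 'I_n.+1 -> gT}) : {ffun 'I_n -> gT} :=
  [ffun j => x (lift ord0 j)].

Lemma ttail_tcons n a (y : {ffun 'I_n -> gT}) : ttail (tcons a y) = y.
Proof. by apply/ffunP=> j; rewrite ffunE tconsS. Qed.

Lemma tcons_ttail n (x : {ffun 'I_n.+1 -> gT}) : tcons (x ord0) (ttail x) = x.
Proof.
apply/ffunP=> i; case: (unliftP ord0 i) => [j -> | ->]; last by rewrite tcons0.
by rewrite tconsS ffunE.
Qed.

Lemma tcons_commuting_tuples (H : {set gT}) n a (y : {ffun 'I_n -> gT}) :
  (tcons a y \in commuting_tuples H n.+1) = (a \in H) && (y \in commuting_tuples 'C_H[a] n).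
Proof.
apply/commuting_tuplesP/andP => [[Hx cx] | [Ha /commuting_tuplesP[CHy cy]]].
  have := Hx ord0; rewrite tcons0 => Ha; split=> //; apply/commuting_tuplesP.
  split=> [j | i j]; last by have := cx (lift ord0 i) (lift ord0 j); rewrite !tconsS.
  rewrite inE -(tconsS a) Hx; apply/cent1P.
  by have := cx (lift ord0 j) ord0; rewrite tconsS tcons0.
have [Hy cya] : (forall j, y j \in H) /\ (forall j, commute (y j) a).
  by split=> j; have /setIP[Hyj /cent1P] := CHy j.
split=> [i | i j].
  by case: (unliftP ord0 i) => [k -> | ->]; rewrite ?tconsS ?tcons0.
case: (unliftP ord0 i) => [k -> | ->]; case: (unliftP ord0 j) => [l -> | ->];
  by rewrite ?tconsS ?tcons0 //; apply: commute_sym.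
Qed.

Lemma card_commuting_tuplesS (H : {set gT}) n :
  #|commuting_tuples H n.+1| = (\sum_(a in H) #|commuting_tuples 'C_H[a] n|)%N.
Proof.
pose head (x : {ffun 'I_n.+1 -> gT}) := x ord0.
rewrite -sum1_card (partition_big head (mem H)) /=; last first.
  by move=> x /commuting_tuplesP[Hx _]; apply: Hx.
apply: eq_bigr => a Ha; rewrite -sum1_card (reindex (tcons a)) /=; last first.
  exists (@ttail n) => [y _ | x /andP[_ /eqP <-]]; [exact: ttail_tcons | exact: tcons_ttail].
by apply: eq_bigl => y; rewrite tcons_commuting_tuples /head tcons0 eqxx Ha andbT.
Qed.

Lemma tconj1 n : @tconj gT n^~ 1 =1 id.
Proof. by move=> x; apply/ffunP=> i; rewrite ffunE conjg1. Qed.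

Lemma tconjM n x : act_morph (@tconj gT n) x.
Proof. by move=> g h; apply/ffunP=> i; rewrite !ffunE conjgM. Qed.

Definition tconj_action n := TotalAction (@tconj1 n) (@tconjM n).

Lemma conjg_fix_cent1 (x g : gT) : (x ^ g == x) = (x \in 'C[g]).
Proof. by rewrite conjg_fix; apply/commgP/cent1P. Qed.

Lemma Fix_commuting_tuples (G : {group gT}) n g : g \in G ->
  'Fix_(commuting_tuples G n | tconj_action n)[g] = commuting_tuples 'C_G[g] n.
Proof.
move=> Gg; apply/setP=> x; rewrite in_setI.
apply/andP/commuting_tuplesP => [[/commuting_tuplesP[Gx cx] /afix1P/ffunP fix_x] | [CGx cx]].
  split=> // i; have := fix_x i; rewrite ffunE => /eqP.
  by rewrite inE Gx conjg_fix_cent1.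
have Gx i : x i \in G by have /setIP[] := CGx i.
split; first by apply/commuting_tuplesP.
apply/afix1P/ffunP=> i; rewrite ffunE; apply/eqP.
by rewrite conjg_fix_cent1; have /setIP[] := CGx i.
Qed.

Lemma tconj_commuting_tuples (G : {group gT}) n x g : g \in G ->
  x \in commuting_tuples G n -> tconj x g \in commuting_tuples G n.
Proof.
move=> Gg /commuting_tuplesP[Gx cx]; apply/commuting_tuplesP.
by split=> [i | i j]; rewrite !ffunE ?groupJ // /commute -!conjMg cx.
Qed.

Lemma acts_commuting_tuples (G : {group gT}) n :
  [acts G, on commuting_tuples G n | tconj_action n].
Proof.
apply/actsP=> g Gg x; apply/idP/idP; last exact: tconj_commuting_tuples.
by move/(tconj_commuting_tuples (groupVr Gg)); rewrite /= -tconjM mulgV tconj1.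
Qed.

Lemma beta_mul_card (G : {group gT}) n :
  (beta G n * #|G| = #|commuting_tuples G n.+1|)%N.
Proof.
rewrite card_commuting_tuplesS.
under eq_bigr => g Gg do rewrite -(Fix_commuting_tuples n Gg).
(* [tconj_orbit G] is convertible to [orbit (tconj_action n) G]. *)
by rewrite Frobenius_Cauchy ?acts_commuting_tuples.
Qed.

Lemma beta0 (G : {group gT}) : beta G 0 = 1%N.
Proof.
apply/eqP; rewrite -(eqn_pmul2r (cardG_gt0 G)) mul1n beta_mul_card.
rewrite card_commuting_tuplesS -sum1_card; apply/eqP/eq_bigr => a _.
exact: commuting_tuples0.
Qed.

End CommutingTuples.

Section CenterFactor.
Variable gT : finGroupType.
Local Open Scope group_scope.

Lemma abelian_center_index_le_prime (H : {group gT}) p :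
  prime p -> p.-group H -> (#|H| <= p * #|'Z(H)|)%N -> abelian H.
Proof.
move=> p_pr pH le_H; apply: cyclic_center_factor_abelian.
have cardHZ := card_quotient (normal_norm (center_normal H)).
rewrite -(Lagrange (center_sub H)) mulnC leq_pmul2r ?cardG_gt0 // in le_H.
have [e idx] := p_natP (pnat_dvd (dvdn_indexg H 'Z(H)) pH).
move: le_H; rewrite idx -{2}(expn1 p) leq_exp2l ?prime_gt1 //.
case: e idx => [|[|//]] idx _; rewrite idx in cardHZ.
  by move/eqP: cardHZ; rewrite -trivg_card1 => /eqP ->; apply: cyclic1.
by apply: prime_cyclic; rewrite cardHZ expn1.
Qed.

Lemma card_center_index_cube (G : {group gT}) p m :
    prime p -> #|G| = (p ^ m)%N -> #|G / 'Z(G)| = (p ^ 3)%N ->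
  exists2 k, m = (k + 3)%N & #|'Z(G)| = (p ^ k)%N.
Proof.
move=> p_pr cardG cardGZ; have p_gt1 := prime_gt1 p_pr.
have := Lagrange (center_sub G).
rewrite -card_quotient ?normal_norm ?center_normal // cardGZ cardG => LagZ.
have le3m : (3 <= m)%N by rewrite -(leq_exp2l _ _ p_gt1) -LagZ leq_pmull.
exists (m - 3)%N; first by rewrite subnK.
apply/eqP; rewrite -(eqn_pmul2r (_ : 0 < p ^ 3)%N) ?expn_gt0 ?prime_gt0 //.
by rewrite LagZ -expnD subnK.
Qed.

End CenterFactor.

Section CenterIndexCube.
Variables (gT : finGroupType) (G : {group gT}) (p k : nat).
Local Open Scope group_scope.
Hypotheses (p_pr : prime p) (pG : p.-group G).
Hypotheses (cardG : #|G| = (p ^ (k + 3))%N) (cardZ : #|'Z(G)| = (p ^ k)%N).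

Let p_gt1 : (1 < p)%N. Proof. exact: prime_gt1. Qed.

Lemma center_sub_cent1 a : a \in G -> 'Z(G) \subset 'C_G[a].
Proof.
move=> Ga; apply/subsetP=> z /centerP[Gz cGz].
by rewrite inE Gz; apply/cent1P; apply: cGz.
Qed.

Lemma cent1_center a : a \in 'Z(G) -> 'C_G[a] = G.
Proof. by move=> /centerP[_ cGa]; apply/setIidPl; rewrite sub_cent1; apply/centP. Qed.

Section Noncentral.
Variable a : gT.
Hypotheses (Ga : a \in G) (aZ : a \notin 'Z(G)).

Let C := 'C_G[a]%G.

Let sCG : C \subset G. Proof. exact: subcent1_sub. Qed.

Let Ca : a \in C. Proof. by rewrite inE Ga cent1id. Qed.

Lemma center_proper_cent1 : 'Z(G) \proper C.
Proof. by apply/properP; split; [exact: center_sub_cent1 | exists a]. Qed.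

Lemma cent1_proper : C \proper G.
Proof.
apply/properP; split=> //; have: ~~ (G \subset 'C[a]).
  by rewrite sub_cent1; apply: contra aZ => cGa; apply/centerP; split=> //; apply/centP.
by case/subsetPn=> g Gg Cg; exists g => //; rewrite inE negb_and Cg orbT.
Qed.

Lemma card_cent1_noncentral : #|C| = (p ^ k.+1)%N \/ #|C| = (p ^ k.+2)%N.
Proof.
have lt_ZC := proper_card center_proper_cent1; have lt_CG := proper_card cent1_proper.
rewrite (card_pgroup (pgroupS sCG pG)) cardZ ltn_exp2l // in lt_ZC.
rewrite (card_pgroup (pgroupS sCG pG)) cardG ltn_exp2l // in lt_CG.
rewrite (card_pgroup (pgroupS sCG pG)).
have [->|->] : logn p #|C| = k.+1 \/ logn p #|C| = k.+2 by lia.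
  by left.
by right.
Qed.

Lemma abelian_cent1_noncentral : abelian C.
Proof.
apply: (abelian_center_index_le_prime p_pr (pgroupS sCG pG)).
have lt_ZZC : 'Z(G) \proper 'Z(C).
  apply/properP; split; last first.
    by exists a => //; apply/centerP; split=> // y /setIP[_ /cent1P/commute_sym].
  apply/subsetP=> z Zz; apply/centerP; split.
    exact: subsetP (center_sub_cent1 Ga) z Zz.
  by move=> y Cy; case/centerP: Zz => _; apply; apply: (subsetP sCG).
have := proper_card lt_ZZC.
rewrite cardZ (card_pgroup (pgroupS (subset_trans (center_sub C) sCG) pG)) ltn_exp2l //.
move=> lt_kZC; rewrite -expnS.
have [->|->] := card_cent1_noncentral; rewrite leq_exp2l //; lia.
Qed.

End Noncentral.

Lemma card_cent1_no_abelian_maximal a :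
    ~ (exists M : {group gT}, maximal M G && abelian M) ->
  a \in G -> a \notin 'Z(G) -> #|'C_G[a]| = (p ^ k.+1)%N.
Proof.
move=> noM Ga aZ; case: (card_cent1_noncentral Ga aZ) => // cardC.
have sCG : 'C_G[a] \subset G := subcent1_sub a G.
have idxC : #|G : 'C_G[a]| = p.
  apply/eqP; rewrite -(eqn_pmul2l (cardG_gt0 'C_G[a])).
  by rewrite Lagrange // cardC cardG addn3 expnSr.
case: noM; exists 'C_G[a]%G; rewrite abelian_cent1_noncentral // andbT.
by apply: p_index_maximal; rewrite ?idxC.
Qed.

Section AbelianMaximal.
Variable M : {group gT}.
Hypotheses (maxM : maximal M G) (cMM : abelian M).

Let sMG : M \subset G. Proof. exact: proper_sub (maxgroupp maxM). Qed.

Lemma card_abelian_maximal : #|M| = (p ^ k.+2)%N.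
Proof.
have := Lagrange sMG; rewrite (p_maximal_index pG maxM) cardG addn3 expnSr.
by move/eqP; rewrite eqn_pmul2r ?prime_gt0 // => /eqP.
Qed.

Lemma cent1_abelian_maximal a : a \in M -> a \notin 'Z(G) -> 'C_G[a] = M.
Proof.
move=> Ma aZ; have Ga := subsetP sMG a Ma.
have sMC : M \subset 'C_G[a] by rewrite subsetI sMG sub_cent1 (subsetP cMM).
apply/esym/eqP; rewrite eqEcard sMC card_abelian_maximal /=.
have [cardC | -> //] := card_cent1_noncentral Ga aZ.
by have := subset_leq_card sMC; rewrite cardC card_abelian_maximal leq_exp2l //; lia.
Qed.

Lemma center_sub_abelian_maximal : 'Z(G) \subset M.
Proof.
have /subsetPn[a Ma aZ] : ~~ (M \subset 'Z(G)).
  apply/negP=> /subset_leq_card; rewrite card_abelian_maximal cardZ leq_exp2l //; lia.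
by rewrite -(cent1_abelian_maximal Ma aZ) center_sub_cent1 ?(subsetP sMG).
Qed.

Lemma card_cent1_notin_abelian_maximal a :
  a \in G -> a \notin M -> #|'C_G[a]| = (p ^ k.+1)%N.
Proof.
move=> Ga aM; have aZ : a \notin 'Z(G).
  by apply: contra aM; apply: (subsetP center_sub_abelian_maximal).
have [-> // | cardC] := card_cent1_noncentral Ga aZ; set C := 'C_G[a] in cardC *.
have cCC : abelian C := abelian_cent1_noncentral Ga aZ.
have sCG : C \subset G := subcent1_sub a G.
have sMCZ : M :&: C \subset 'Z(G).
  apply/subsetP=> y /setIP[My Cy]; apply: contraR aM => yZ.
  have sCCy : C \subset 'C_G[y] by rewrite subsetI sCG sub_cent1 (subsetP cCC).
  have eqCM : C = M.
    apply/eqP; rewrite eqEcard -{1}(cent1_abelian_maximal My yZ) sCCy.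
    by rewrite card_abelian_maximal cardC leqnn.
  by rewrite -eqCM inE Ga cent1id.
have := mul_cardG M C; rewrite card_abelian_maximal cardC.
have := subset_leq_card (mul_subG sMG sCG); have := subset_leq_card sMCZ.
rewrite cardG cardZ => le_MCZ le_MCG eq_card.
have : (p ^ k.+2 * p ^ k.+2 <= p ^ (k + 3) * p ^ k)%N by rewrite eq_card leq_mul.
by rewrite -!expnD leq_exp2l //; lia.
Qed.

End AbelianMaximal.

Lemma card_commuting_tuples_rec (M : {set gT}) x y n :
    'Z(G) \subset M -> M \subset G ->
    {in M :\: 'Z(G), forall a, #|'C_G[a]| = x} ->
    {in G :\: M, forall a, #|'C_G[a]| = y} ->
  #|commuting_tuples G n.+1| =
    (p ^ k * #|commuting_tuples G n| + (#|M| - p ^ k) * x ^ n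
       + (p ^ (k + 3) - #|M|) * y ^ n)%N.
Proof.
move=> sZM sMG cardCx cardCy.
have card_ct a : a \in G -> a \notin 'Z(G) ->
    #|commuting_tuples 'C_G[a] n| = (#|'C_G[a]| ^ n)%N.
  by move=> Ga aZ; rewrite card_commuting_tuples_abelian ?abelian_cent1_noncentral.
rewrite card_commuting_tuplesS (big_setID M) (big_setID 'Z(G)) /=.
rewrite (setIidPr sMG) (setIidPr sZM) -cardZ -cardG.
rewrite -[in #|M| - _](setIidPr sZM) -[in #|G| - _](setIidPr sMG) -!cardsD.
rewrite -!sum_nat_const; congr (_ + _ + _); apply: eq_bigr => a.
- by move=> Za; rewrite cent1_center.
- by move=> /[dup] MZa /setDP[Ma aZ]; rewrite card_ct ?(subsetP sMG) // cardCx.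
- move=> /[dup] GMa /setDP[Ga aM]; rewrite card_ct ?cardCy //.
  by apply: contra aM; apply: (subsetP sZM).
Qed.

Lemma card_commuting_tuples_rec_no_abelian_maximal n :
    ~ (exists M : {group gT}, maximal M G && abelian M) ->
  #|commuting_tuples G n.+1| =
    (p ^ k * #|commuting_tuples G n| + (p ^ (k + 3) - p ^ k) * (p ^ k.+1) ^ n)%N.
Proof.
move=> noM; rewrite (@card_commuting_tuples_rec 'Z(G) 0 (p ^ k.+1)) ?center_sub //.
- by rewrite cardZ subnn mul0n addn0.
- by move=> a; rewrite setDv inE.
by move=> a /setDP[Ga aZ]; apply: card_cent1_no_abelian_maximal.
Qed.

Lemma card_commuting_tuples_rec_abelian_maximal (M : {group gT}) n :
    maximal M G -> abelian M ->
  #|commuting_tuples G n.+1| =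
    (p ^ k * #|commuting_tuples G n| + (p ^ k.+2 - p ^ k) * (p ^ k.+2) ^ n
       + (p ^ (k + 3) - p ^ k.+2) * (p ^ k.+1) ^ n)%N.
Proof.
move=> maxM cMM; rewrite -(card_abelian_maximal maxM).
apply: card_commuting_tuples_rec.
- exact: center_sub_abelian_maximal maxM cMM.
- exact: proper_sub (maxgroupp maxM).
- move=> a /setDP[Ma aZ].
  by rewrite (cent1_abelian_maximal maxM cMM Ma aZ) (card_abelian_maximal maxM).
by move=> a /setDP[Ga aM]; apply: (card_cent1_notin_abelian_maximal maxM cMM Ga aM).
Qed.

End CenterIndexCube.

Local Open Scope ring_scope.

Lemma fps_geom_mul0 b u : fps_mul (fps_geom b) u 0 = u 0%N.
Proof. by rewrite /fps_mul big_ord1 /fps_geom expr0 mul1r. Qed.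

Lemma fps_geom_mulS b u n :
  fps_mul (fps_geom b) u n.+1 = b * fps_mul (fps_geom b) u n + u n.+1.
Proof.
rewrite /fps_mul big_ord_recl /= subn0 /fps_geom expr0 mul1r addrC; congr (_ + _).
rewrite big_distrr /=; apply: eq_bigr => i _.
by rewrite /bump /= add1n subSS exprS mulrA.
Qed.

Lemma fps_mulC u v : fps_mul u v = fps_mul v u.
Proof.
apply: functional_extensionality => n; rewrite /fps_mul (reindex_inj rev_ord_inj) /=.
by apply: eq_bigr => i _; rewrite mulrC subKn ?leq_ord.
Qed.

Lemma fps_scaleX_mul0 c v : fps_mul (fps_of_poly (c *: 'X)) v 0 = 0.
Proof. by rewrite /fps_mul big_ord1 /fps_of_poly coefZ coefX mulr0 mul0r. Qed.

Lemma fps_scaleX_mulS c v n : fps_mul (fps_of_poly (c *: 'X)) v n.+1 = c * v n.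
Proof.
rewrite /fps_mul !big_ord_recl big1 => [|i _]; last first.
  by rewrite /fps_of_poly coefZ coefX mulr0 mul0r.
by rewrite /fps_of_poly !coefZ !coefX /= mulr0 mul0r mulr1 subn1 add0r addr0.
Qed.

Lemma fps_subX_mul0 c v : fps_mul (fps_of_poly (1 - c *: 'X)) v 0 = v 0%N.
Proof.
by rewrite /fps_mul big_ord1 /fps_of_poly coefB coefZ coefX coef1 mulr0 subr0 mul1r.
Qed.

Lemma fps_subX_mulS c v n :
  fps_mul (fps_of_poly (1 - c *: 'X)) v n.+1 = v n.+1 - c * v n.
Proof.
rewrite /fps_mul !big_ord_recl big1 => [|i _]; last first.
  by rewrite /fps_of_poly coefB coefZ coefX coef1 mulr0 subr0 mul0r.
rewrite /fps_of_poly !coefB !coefZ !coefX !coef1 /= mulr0 subr0 mul1r mulr1 sub0r subn1.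
by rewrite mulNr addr0.
Qed.

Lemma fps_rec_geom (B : fps) a b c :
    B 0%N = 1 -> (forall n, B n.+1 = b * B n + (a - c) * a ^+ n) ->
  B = fps_mul (fps_of_poly (1 - c *: 'X)) (fps_mul (fps_geom a) (fps_geom b)).
Proof.
move=> B0 BS; rewrite [fps_mul (fps_geom a) _]fps_mulC.
set h := fps_mul (fps_geom b) (fps_geom a).
have h0 : h 0%N = 1 by rewrite /h fps_geom_mul0 /fps_geom expr0.
have hS n : h n.+1 = b * h n + a ^+ n.+1 by rewrite /h fps_geom_mulS.
apply: functional_extensionality; elim=> [|n IH]; first by rewrite B0 fps_subX_mul0.
rewrite BS IH !fps_subX_mulS hS; case: n {IH} => [|n].
  by rewrite fps_subX_mul0 h0; ring.
by rewrite fps_subX_mulS hS !exprS; ring.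
Qed.

Lemma fps_rec_geom2 (B : fps) b a1 d1 a2 d2 :
    B 0%N = 1 -> (forall n, B n.+1 = b * B n + d1 * a1 ^+ n + d2 * a2 ^+ n) ->
  B = fps_mul (fps_geom b) (fps_add (fps_of_poly 1)
        (fps_add (fps_mul (fps_of_poly (d1 *: 'X)) (fps_geom a1))
                 (fps_mul (fps_of_poly (d2 *: 'X)) (fps_geom a2)))).
Proof.
move=> B0 BS; apply: functional_extensionality; elim=> [|n IH].
  by rewrite B0 fps_geom_mul0 /fps_add !fps_scaleX_mul0 /fps_of_poly coef1 !addr0.
rewrite BS fps_geom_mulS IH /fps_add !fps_scaleX_mulS /fps_of_poly coef1 /= add0r.
by rewrite addrA.
Qed.

Lemma pz_subn (p m j : nat) : (0 < p)%N -> pz p (m%:Z - j%:Z) = p%:R ^+ m / p%:R ^+ j.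
Proof. by move=> p_gt0; rewrite /pz expfzDr ?exprnN // pnatr_eq0 -lt0n. Qed.

Section BseriesRec.
Variables (gT : finGroupType) (G : {group gT}) (p k : nat).
Hypotheses (p_pr : prime p) (pG : (p.-group G)%g).
Hypotheses (cardG : #|G| = (p ^ (k + 3))%N) (cardZ : #|'Z(G)%g| = (p ^ k)%N).

Let q : rat := p%:R.
Let q_neq0 : q != 0. Proof. by rewrite pnatr_eq0 -lt0n prime_gt0. Qed.
Let Q := q ^+ k.
Let Q_neq0 : Q != 0. Proof. exact: expf_neq0. Qed.

Lemma Bseries_card n : Bseries G n = #|commuting_tuples G n.+1|%:R / (Q * q ^+ 3).
Proof.
by rewrite -beta_mul_card natrM cardG natrX -exprD mulfK // expf_neq0.
Qed.

Let pz_sub_k3 (j : nat) : pz p ((k + 3)%N%:Z - j%:Z) = Q * q ^+ 3 / q ^+ j.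
Proof. by rewrite pz_subn ?prime_gt0 // exprD. Qed.

Let QqE : Q * q ^+ 3 / q ^+ 2 = Q * q.
Proof. by field. Qed.

Lemma Bseries_rec_no_abelian_maximal n :
    ~ (exists M : {group gT}, (maximal M G && abelian M)%g) ->
  Bseries G n.+1 =
    pz p ((k + 3)%N%:Z - 3) * Bseries G n
    + (pz p ((k + 3)%N%:Z - 2) - pz p ((k + 3)%N%:Z - 5))
      * pz p ((k + 3)%N%:Z - 2) ^+ n.
Proof.
move=> noM; rewrite !Bseries_card (pz_sub_k3 3) (pz_sub_k3 2) (pz_sub_k3 5) QqE.
rewrite (card_commuting_tuples_rec_no_abelian_maximal p_pr pG cardG cardZ _ noM).
rewrite natrD !natrM natrB ?leq_pexp2l ?prime_gt0 ?leq_addr // !natrX -/q -/Q exprD -/Q.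
rewrite [q ^+ k.+1]exprSr -/Q [(Q * q) ^+ n.+1]exprSr.
by field; rewrite q_neq0 Q_neq0.
Qed.

Lemma Bseries_rec_abelian_maximal (M : {group gT}) n :
    (maximal M G && abelian M)%g ->
  Bseries G n.+1 =
    pz p ((k + 3)%N%:Z - 3) * Bseries G n
    + (pz p ((k + 3)%N%:Z - 2) - pz p ((k + 3)%N%:Z - 4))
      * pz p ((k + 3)%N%:Z - 1) ^+ n
    + (pz p ((k + 3)%N%:Z - 2) - pz p ((k + 3)%N%:Z - 3))
      * pz p ((k + 3)%N%:Z - 2) ^+ n.
Proof.
move=> /andP[maxM cMM].
have le_k_k2 : (p ^ k <= p ^ k.+2)%N by rewrite leq_exp2l ?prime_gt1 // -addn2 leq_addr.
have le_k2_k3 : (p ^ k.+2 <= p ^ (k + 3))%N by rewrite leq_exp2l ?prime_gt1 // addn3.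
rewrite !Bseries_card (pz_sub_k3 3) (pz_sub_k3 2) (pz_sub_k3 4) (pz_sub_k3 1) QqE.
have -> : Q * q ^+ 3 / q ^+ 1 = Q * q ^+ 2 by field.
rewrite (card_commuting_tuples_rec_abelian_maximal p_pr pG cardG cardZ _ maxM cMM).
rewrite !natrD !natrM !natrB // !natrX -/q -/Q exprD -/Q.
rewrite [q ^+ k.+1]exprSr [q ^+ k.+2]exprSr [q ^+ k.+1]exprSr -/Q.
rewrite [(Q * q) ^+ n.+1]exprSr [(Q * q * q) ^+ n.+1]exprSr -mulrA -expr2.
by field; rewrite q_neq0 Q_neq0.
Qed.

End BseriesRec.

Theorem theorem8p3 (gT : finGroupType) (G : {group gT}) (p m : nat) :
  prime p -> (p.-group G)%g -> #|G| = (p ^ m)%N -> #|(G / 'Z(G))%g| = (p ^ 3)%N ->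
  ((~ (exists M : {group gT}, maximal M G && abelian M)) ->
     Bseries G =
     fps_mul (fps_of_poly (1 - (pz p (m%:Z - 5)) *: 'X))
       (fps_mul (fps_geom (pz p (m%:Z - 2))) (fps_geom (pz p (m%:Z - 3)))))
  /\
  ((exists M : {group gT}, maximal M G && abelian M) ->
     Bseries G =
     fps_mul (fps_geom (pz p (m%:Z - 3)))
       (fps_add (fps_of_poly 1)
         (fps_add
           (fps_mul (fps_of_poly ((pz p (m%:Z - 2) - pz p (m%:Z - 4)) *: 'X))
                    (fps_geom (pz p (m%:Z - 1))))
           (fps_mul (fps_of_poly ((pz p (m%:Z - 2) - pz p (m%:Z - 3)) *: 'X))
                    (fps_geom (pz p (m%:Z - 2))))))).
Proof.
move=> p_pr pG cardG cardGZ.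
have [k def_m cardZ] := card_center_index_cube p_pr cardG cardGZ; subst m.
have B0 : Bseries G 0 = 1 by rewrite /Bseries beta0.
split=> [noM | [M abM]].
  apply: fps_rec_geom => // n.
  exact: Bseries_rec_no_abelian_maximal p_pr pG cardG cardZ n noM.
apply: fps_rec_geom2 => // n.
exact: Bseries_rec_abelian_maximal p_pr pG cardG cardZ M n abM.
Qed.
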